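(* Let $\mathcal{H}=(V,E)$ be a hypergraph and let $\mathbf{v}^*$ be an optimal solution of the linear program: minimize $\sum_{x\in V}v_x$ subject to $\sum_{x\in e}v_x\ge1$ for all $e\in E$ and $v_x\ge0$ for all $x\in V$. Consider the linear program: maximize $\sum_{x\in V}\psi_x$ subject to $\sum_{x\in e}\psi_x\le 1$ for every $e\in E$ with $\sum_{x\in e}v^*_x=1$, $\psi_x\le 0$ for every $x$ with $v^*_x=0$, and $\psi_x\ge0$ for all $x\in V$. Then $\mathbf{v}^*$ is an optimal solution of the second linear program. *)

From mathcomp Require Import all_boot all_order all_algebra.
Set Implicit Arguments. Unset Strict Implicit. Unset Printing Implicit Defensive.
Import Order.TTheory GRing.Theory Num.Theory.
Local Open Scope ring_scope.

Section LPs.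
Variables (R : realFieldType) (V : finType) (E : {set {set V}}).

Definition cover_feasible (v : V -> R) : Prop :=
  (forall e, e \in E -> 1 <= \sum_(x in e) v x) /\ (forall x, 0 <= v x).

Definition cover_optimal (v : V -> R) : Prop :=
  cover_feasible v /\
  forall w : V -> R, cover_feasible w -> \sum_x v x <= \sum_x w x.

Definition lp2_feasible (vs psi : V -> R) : Prop :=
  (forall e, e \in E -> \sum_(x in e) vs x = 1 -> \sum_(x in e) psi x <= 1) /\
  (forall x, vs x = 0 -> psi x <= 0) /\
  (forall x, 0 <= psi x).

Definition lp2_optimal (vs psi : V -> R) : Prop :=
  lp2_feasible vs psi /\
  forall phi : V -> R, lp2_feasible vs phi -> \sum_x phi x <= \sum_x psi x.

End LPs.

(* If an LP2-feasible psi had a larger sum than v*, moving from v* a little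
   in the direction v* - psi would stay a fractional cover: on tight edges
   the constraint sum_e psi <= 1 keeps the edge sum >= 1, vertices with
   v*_x = 0 stay at 0 because psi_x = 0 there, and all remaining constraints
   hold with slack, which survives a small enough step.  The new cover would
   have a smaller sum than v*, contradicting optimality. *)
From mathcomp Require Import all_boot all_order all_algebra.
From mathcomp Require Import lra.
Set Implicit Arguments. Unset Strict Implicit. Unset Printing Implicit Defensive.
Import Order.TTheory GRing.Theory Num.Theory.
Local Open Scope ring_scope.

Lemma small_perturbation_ge0 (R : realFieldType) (I : finType) (P : pred I)
    (a b : I -> R) :
  (forall i, P i -> 0 < a i) ->
  exists2 t, 0 < t & forall s i, 0 <= s <= t -> P i -> 0 <= a i + s * b i.
Proof.
move=> a_gt0.
pose K := \sum_(i | P i) `|b i| / a i.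
have K_ge0 : 0 <= K.
  by apply: sumr_ge0 => i /a_gt0 ai_gt0; exact: divr_ge0 (ltW ai_gt0).
(* With t = 1 / (1 + K), t |b i| <= K a i / (1 + K) < a i. *)
exists (1 + K)^-1; first by rewrite invr_gt0; lra.
move=> s i /andP[s_ge0 s_le] Pi.
have ai_gt0 := a_gt0 i Pi.
have bi_le : `|b i| <= K * a i.
  rewrite -ler_pdivrMr // /K (bigD1 i) //= lerDl.
  by apply: sumr_ge0 => j /andP[/a_gt0 aj_gt0 _]; exact: divr_ge0 (ltW aj_gt0).
have : s * (1 + K) <= 1 by rewrite -ler_pdivlMr //; lra.
have := ler_norm (- b i); rewrite normrN.
nra.
Qed.

Section CoverPerturbation.
Variables (R : realFieldType) (V : finType) (E : {set {set V}}).
Variables (vs phi : V -> R).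
Hypotheses (vs_cover : cover_feasible E vs) (phi_lp2 : lp2_feasible E vs phi).

Definition perturb (t : R) (x : V) : R := vs x + t * (vs x - phi x).

Lemma sum_perturb t (A : {pred V}) :
  \sum_(x in A) perturb t x =
  \sum_(x in A) vs x + t * (\sum_(x in A) vs x - \sum_(x in A) phi x).
Proof. by rewrite big_split /= -mulr_sumr sumrB. Qed.

Lemma perturb_tight_edge t e :
  0 <= t -> e \in E -> \sum_(x in e) vs x = 1 -> 1 <= \sum_(x in e) perturb t x.
Proof.
move=> t_ge0 eE tight; have := phi_lp2.1 e eE tight.
rewrite sum_perturb tight; nra.
Qed.

Lemma perturb_zero_vertex t x : vs x = 0 -> perturb t x = 0.
Proof.
move=> vx0; have phix0 : phi x = 0.
  by apply/le_anti; rewrite phi_lp2.2.1 // phi_lp2.2.2.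
by rewrite /perturb vx0 phix0 subrr mulr0 addr0.
Qed.

Lemma perturb_cover_feasible :
  exists2 t, 0 < t & cover_feasible E (perturb t).
Proof.
have [|t1 t1_gt0 slack_edges] := @small_perturbation_ge0 R {set V}
    [pred e | (e \in E) && (\sum_(x in e) vs x != 1)]
    (fun e => \sum_(x in e) vs x - 1)
    (fun e => \sum_(x in e) vs x - \sum_(x in e) phi x).
  by move=> e /= /andP[eE ne1]; rewrite subr_gt0 lt_neqAle eq_sym ne1 vs_cover.1.
have [|t2 t2_gt0 positive_vertices] := @small_perturbation_ge0 R V
    [pred x | vs x != 0] vs (fun x => vs x - phi x).
  by move=> x /= vx; rewrite lt_neqAle eq_sym vx vs_cover.2.
pose t := Num.min t1 t2.
have t_ge0 : 0 <= t by rewrite le_min !ltW.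
have t_le1 : 0 <= t <= t1 by rewrite t_ge0 ge_min lexx.
have t_le2 : 0 <= t <= t2 by rewrite t_ge0 ge_min lexx orbT.
exists t; first by rewrite lt_min t1_gt0.
split=> [e eE | x].
  have [tight | ne1] := eqVneq (\sum_(x in e) vs x) 1.
    exact: perturb_tight_edge.
  have /= := slack_edges t e t_le1; rewrite eE ne1 sum_perturb => /(_ isT).
  lra.
have [vx0 | vx] := eqVneq (vs x) 0; first by rewrite perturb_zero_vertex.
exact: positive_vertices.
Qed.

End CoverPerturbation.

Theorem lemmaF1 (R : realFieldType) (V : finType) (E : {set {set V}})
  (vs : V -> R) :
  cover_optimal E vs -> lp2_optimal E vs vs.
Proof.
move=> [vs_cover vs_min]; split=> [|phi phi_lp2].
  by split=> [e _ -> // | ]; split=> [x -> // | ]; exact: vs_cover.2.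
have [t t_gt0 perturb_cover] := perturb_cover_feasible vs_cover phi_lp2.
have := vs_min _ perturb_cover; rewrite sum_perturb lerDl pmulr_rge0 //.
by rewrite subr_ge0.
Qed.
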